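(* Let $L$ be a right Leibniz algebra. Then $L$ is prime if and only if $\mathrm{ran}_L(I)=\{0\}$ for every nonzero ideal $I$ of $L$.
   Context: A right Leibniz algebra satisfies $[x,[y,z]]=[[x,y],z]-[[x,z],y]$. Ideals: subspaces $I$ with $[I,L]\subseteq I$, $[L,I]\subseteq I$. $L$ is prime if $[I,J]\ne\{0\}$ for any two nonzero ideals $I,J$ (where $[I,J]$ is the span of $[x,y]$, $x\in I$, $y\in J$). $\mathrm{ran}_L(I)=\{x\in L:[y,x]=0\ \forall y\in I\}$. *)

From HB Require Import structures.
From mathcomp Require Import all_boot all_algebra.
Set Implicit Arguments. Unset Strict Implicit. Unset Printing Implicit Defensive.
Import GRing.Theory.
Local Open Scope ring_scope.

(* A (not necessarily finite-dimensional) algebra over a field F is an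
   F-vector space V together with a bilinear bracket br. Subsets of V are
   predicates V -> Prop. *)
Section Leibniz.
Variables (F : fieldType) (V : lmodType F).

Definition bilinear_bracket (br : V -> V -> V) : Prop :=
  (forall (a : F) (x y z : V), br (a *: x + y) z = a *: br x z + br y z) /\
  (forall (a : F) (x y z : V), br z (a *: x + y) = a *: br z x + br z y).

Definition right_leibniz_identity (br : V -> V -> V) : Prop :=
  forall x y z : V, br x (br y z) = br (br x y) z - br (br x z) y.

Definition right_leibniz_algebra (br : V -> V -> V) : Prop :=
  bilinear_bracket br /\ right_leibniz_identity br.

Definition subspace (S : V -> Prop) : Prop :=
  S 0 /\ (forall x y, S x -> S y -> S (x + y)) /\
  (forall (a : F) x, S x -> S (a *: x)).

Definition ideal (br : V -> V -> V) (I : V -> Prop) : Prop :=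
  subspace I /\ (forall x y, I x -> I (br x y)) /\ (forall x y, I x -> I (br y x)).

Definition nonzero_set (S : V -> Prop) : Prop := exists x, S x /\ x <> 0.

(* [I,J] = span of {[x,y] | x ∈ I, y ∈ J}: the smallest subspace containing them *)
Definition bracket_span (br : V -> V -> V) (I J : V -> Prop) (z : V) : Prop :=
  forall S : V -> Prop, subspace S ->
    (forall x y, I x -> J y -> S (br x y)) -> S z.

Definition is_zero_set (S : V -> Prop) : Prop := forall z, S z <-> z = 0.

Definition prime_algebra (br : V -> V -> V) : Prop :=
  forall I J : V -> Prop, ideal br I -> ideal br J ->
    nonzero_set I -> nonzero_set J -> ~ is_zero_set (bracket_span br I J).

Definition ran (br : V -> V -> V) (I : V -> Prop) (x : V) : Prop :=
  forall y, I y -> br y x = 0.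

End Leibniz.

From mathcomp Require Import all_boot all_algebra.
Set Implicit Arguments. Unset Strict Implicit. Unset Printing Implicit Defensive.
Import GRing.Theory.
Local Open Scope ring_scope.

(* The right annihilator ran_L(I) of an ideal I is again an ideal (this is
   where the right Leibniz identity enters), and [I, ran_L(I)] = 0 by
   construction. So in a prime algebra ran_L(I) must vanish for I <> 0.
   Conversely, if [I, J] = 0 then J is contained in ran_L(I), hence J = 0. *)

Section RightAnnihilator.
Variables (F : fieldType) (V : lmodType F) (br : V -> V -> V).

Lemma subspace_eq0 : subspace (fun v : V => v = 0).
Proof. by split; [|split] => [|x y -> ->|a x ->]; rewrite ?addr0 ?scaler0. Qed.

Lemma bracket_span_eq0 (I J : V -> Prop) :
  is_zero_set (bracket_span br I J) <-> (forall x y, I x -> J y -> br x y = 0).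
Proof.
split=> [span0 x y Ix Jy | brIJ z].
  by apply/span0 => S _ SIJ; exact: SIJ.
split=> [spanz | -> S [S0 _] _ //].
exact: spanz subspace_eq0 brIJ.
Qed.

Hypothesis br_bilinear : bilinear_bracket br.

Lemma bracket0r (x : V) : br 0 x = 0.
Proof.
have := br_bilinear.1 1 0 0 x; rewrite !scale1r !addr0 => double.
by apply: (addrI (br 0 x)); rewrite addr0 -double.
Qed.

Lemma bracketr0 (x : V) : br x 0 = 0.
Proof.
have := br_bilinear.2 1 0 0 x; rewrite !scale1r !addr0 => double.
by apply: (addrI (br x 0)); rewrite addr0 -double.
Qed.

Lemma bracketrD (z x y : V) : br z (x + y) = br z x + br z y.
Proof. by rewrite -(scale1r x) br_bilinear.2 !scale1r. Qed.

Lemma bracketrZ (z : V) (a : F) (x : V) : br z (a *: x) = a *: br z x.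
Proof. by rewrite -(addr0 (a *: x)) br_bilinear.2 bracketr0 addr0. Qed.

Lemma ran_subspace (I : V -> Prop) : subspace (ran br I).
Proof.
split; [|split].
- by move=> y _; rewrite bracketr0.
- by move=> x y Rx Ry z Iz; rewrite bracketrD Rx // Ry // addr0.
- by move=> a x Rx z Iz; rewrite bracketrZ Rx // scaler0.
Qed.

Hypothesis br_leibniz : right_leibniz_identity br.

Lemma ran_ideal (I : V -> Prop) : ideal br I -> ideal br (ran br I).
Proof.
move=> [_ [IbrL _]]; split; first exact: ran_subspace.
(* The Leibniz identity expresses [z,[x,y]] and [z,[y,x]] through
   [[z,x],y] = [0,y] and [[z,y],x], which vanishes because [z,y] lies in I. *)
by split=> x y Rx z Iz;
  rewrite br_leibniz (Rx z Iz) (Rx _ (IbrL z y Iz)) bracket0r subrr.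
Qed.

End RightAnnihilator.

Theorem proposition2p9 (F : fieldType) (V : lmodType F) (br : V -> V -> V)
  (hL : right_leibniz_algebra br) :
  prime_algebra br <->
  (forall I : V -> Prop, ideal br I -> nonzero_set I -> is_zero_set (ran br I)).
Proof.
have [br_bilinear br_leibniz] := hL.
split=> [primeL I idI nzI z | ran0 I J idI _ nzI [y [Jy y_neq0]] span0].
- split=> [Rz | ->]; last exact: (ran_subspace br_bilinear I).1.
  have [// | /eqP z_neq0] := eqVneq z 0.
  case: (primeL I _ idI (ran_ideal br_bilinear br_leibniz idI) nzI).
    by exists z.
  by apply/bracket_span_eq0 => x w Ix Rw; exact: Rw x Ix.
- apply: y_neq0; apply/(ran0 I idI nzI) => x Ix.
  exact: (bracket_span_eq0 br I J).1 span0 x y Ix Jy.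
Qed.
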